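(* For every integer $b\geq 2$ there exist graphs $G$ and $H$ such that $\rho(G\square H)-\rho(G)\rho(H)=b$.
   Context: All graphs are finite and simple. A set $P\subseteq V(G)$ is a packing of $G$ if $N[u]\cap N[v]=\emptyset$ for all distinct $u,v\in P$, where $N[u]$ is the closed neighborhood of $u$; the packing number $\rho(G)$ is the maximum cardinality of a packing of $G$. The Cartesian product $G\square H$ has vertex set $V(G)\times V(H)$, with $(g,h)$ adjacent to $(g',h')$ iff ($gg'\in E(G)$ and $h=h'$) or ($g=g'$ and $hh'\in E(H)$). *)

From mathcomp Require Import all_boot all_order all_algebra.
Set Implicit Arguments. Unset Strict Implicit. Unset Printing Implicit Defensive.

Definition simple_graph (T : finType) (e : rel T) : Prop :=
  symmetric e /\ irreflexive e.

Definition cnbhd (T : finType) (e : rel T) (u : T) : {set T} :=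
  [set v | (v == u) || e u v].

Definition packing (T : finType) (e : rel T) (P : {set T}) : bool :=
  [forall u in P, forall v in P, (u != v) ==> [disjoint cnbhd e u & cnbhd e v]].

Definition packing_number (T : finType) (e : rel T) : nat :=
  \max_(P : {set T} | packing e P) #|P|.

Definition cart_rel (T1 T2 : finType) (e1 : rel T1) (e2 : rel T2) : rel (T1 * T2) :=
  fun x y => (e1 x.1 y.1 && (x.2 == y.2)) || ((x.1 == y.1) && e2 x.2 y.2).

From mathcomp Require Import all_boot all_order all_algebra.
Set Implicit Arguments. Unset Strict Implicit. Unset Printing Implicit Defensive.

(* The witnesses are two copies of the star K_{1,n} (n = b + 1), whose centre
   is a universal vertex.
   For the star the leaves form an independent set of size n, hence
   rho(K_{1,n} [] K_{1,n}) = n while rho(K_{1,n}) = 1, and the difference is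
   n - 1 = b. *)

Section Packings.
Variables (T : finType) (e : rel T).

Lemma packing_eq P u v z : packing e P -> u \in P -> v \in P ->
  z \in cnbhd e u -> z \in cnbhd e v -> u = v.
Proof.
move=> /forall_inP packP Pu Pv zu zv; apply/eqP/negPn/negP => neq_uv.
have /forall_inP /(_ v Pv) /implyP /(_ neq_uv) disj_uv := packP u Pu.
by rewrite (disjointFr disj_uv zu) in zv.
Qed.

Lemma packing_set1 u : packing e [set u].
Proof.
apply/forall_inP => x /set1P ->; apply/forall_inP => y /set1P ->.
by rewrite eqxx.
Qed.

Lemma packing_number_max (P : {set T}) : packing e P -> #|P| <= packing_number e.
Proof. exact: (@leq_bigmax_cond _ (packing e) (fun Q => #|Q|)). Qed.

Lemma packing_numberE m P :
  (forall Q, packing e Q -> #|Q| <= m) -> packing e P -> #|P| = m ->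
  packing_number e = m.
Proof.
move=> ubm packP cardP; apply/eqP; rewrite eqn_leq; apply/andP; split.
  by apply/bigmax_leqP => Q; exact: ubm.
by rewrite -cardP packing_number_max.
Qed.

Definition universal (z : T) : Prop := forall v, z \in cnbhd e v.

(* Any packing of a graph with a universal vertex z has at most one vertex,
   since z is a common neighbour of all its members. *)
Lemma universal_packing_number z : universal z -> packing_number e = 1.
Proof.
move=> univ_z; apply: (packing_numberE _ (packing_set1 z)); last exact: cards1.
move=> Q packQ; have [->|[u Qu]] := set_0Vmem Q; first by rewrite cards0.
rewrite -(cards1 u); apply/subset_leq_card/subsetP => v Qv.
by apply/set1P; exact: (packing_eq packQ Qv Qu (univ_z v) (univ_z u)).
Qed.

Lemma cnbhd_sym : symmetric e -> forall x y, (x \in cnbhd e y) = (y \in cnbhd e x).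
Proof. by move=> sym_e x y; rewrite !inE eq_sym sym_e. Qed.

End Packings.

Section CartesianProduct.
Variables (T1 T2 : finType) (e1 : rel T1) (e2 : rel T2).
Local Notation c := (cart_rel e1 e2).

Lemma cnbhd_cartE x y a b :
  ((a, b) \in cnbhd c (x, y)) =
  ((a == x) && (b \in cnbhd e2 y)) || ((b == y) && (a \in cnbhd e1 x)).
Proof.
rewrite !inE /cart_rel /= xpair_eqE (eq_sym x) (eq_sym y).
by case: (a =P x) => [->|_]; case: (b =P y) => [->|_];
  rewrite /= ?eqxx ?andbF ?andbT ?orbF.
Qed.

Lemma cnbhd_cart_l x y y' : y' \in cnbhd e2 y -> (x, y') \in cnbhd c (x, y).
Proof. by move=> N_yy'; rewrite cnbhd_cartE eqxx N_yy'. Qed.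

Lemma cnbhd_cart_r x x' y : x' \in cnbhd e1 x -> (x', y) \in cnbhd c (x, y).
Proof. by move=> N_xx'; rewrite cnbhd_cartE eqxx N_xx' orbT. Qed.

Hypotheses (sym1 : symmetric e1) (g0 : T1) (h0 : T2).
Hypotheses (univ_g0 : universal e1 g0) (univ_h0 : universal e2 h0).

(* Packings of G [] H when G and H have universal vertices g0 and h0: the
   common neighbours (x, h0) and (g0, y) make both projections injective on P.
   If a projection misses g0 (resp. h0), P is smaller than V(G) (resp. V(H));
   otherwise P contains vertices (g0, y1) and (x2, h0), which share the
   neighbour (g0, h0) and thus both equal (g0, h0), a vertex adjacent to
   every (x, h0), so that P = {(g0, h0)}. *)
Lemma cart_packing_small P : packing c P ->
  [\/ #|P| <= 1, #|P| < #|T1| | #|P| < #|T2|].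
Proof.
move=> packP.
have inj_fst : {in P &, injective (fun u : T1 * T2 => u.1)}.
  move=> [x y] [x' y'] Pu Pv /= eq_x; subst x'.
  exact: (packing_eq packP Pu Pv (cnbhd_cart_l x (univ_h0 y))
                                (cnbhd_cart_l x (univ_h0 y'))).
have inj_snd : {in P &, injective (fun u : T1 * T2 => u.2)}.
  move=> [x y] [x' y'] Pu Pv /= eq_y; subst y'.
  exact: (packing_eq packP Pu Pv (cnbhd_cart_r y (univ_g0 x))
                                (cnbhd_cart_r y (univ_g0 x'))).
have [/imsetP[[g y1] Pgy /= eq_g]|g0_out] := boolP (g0 \in [set u.1 | u in P]).
  2: { apply: Or32; rewrite -(card_in_imset inj_fst) -cardsT proper_card //.
       by rewrite properT; apply: contraNneq g0_out => ->; rewrite inE. }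
have [/imsetP[[x2 h] Pxh /= eq_h]|h0_out] := boolP (h0 \in [set u.2 | u in P]).
  2: { apply: Or33; rewrite -(card_in_imset inj_snd) -cardsT proper_card //.
       by rewrite properT; apply: contraNneq h0_out => ->; rewrite inE. }
subst g h.
have corner_eq : (g0, y1) = (x2, h0).
  exact: (packing_eq packP Pgy Pxh (cnbhd_cart_l g0 (univ_h0 y1))
                                  (cnbhd_cart_r h0 (univ_g0 x2))).
have P_corner : (g0, h0) \in P by move: corner_eq Pxh => [-> _] ->.
apply: Or31; rewrite -(cards1 (g0, h0)); apply/subset_leq_card/subsetP.
move=> [x y] Pxy; apply/set1P.
apply: (packing_eq packP Pxy P_corner (cnbhd_cart_l x (univ_h0 y))).
by apply: cnbhd_cart_r; rewrite cnbhd_sym.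
Qed.

End CartesianProduct.

Definition independent (T : finType) (e : rel T) (S : {set T}) : bool :=
  [forall x in S, forall y in S, ~~ e x y].

(* The diagonal {(x, x) | x in S} of an independent set S is a packing of
   G [] G: a common neighbour of (x, x) and (y, y) lies in N[x] x {x} or
   {x} x N[x], and in the analogous set for y, which forces x = y or x in N[y]. *)
Lemma packing_diag (T : finType) (e : rel T) S : independent e S ->
  packing (cart_rel e e) [set (x, x) | x in S].
Proof.
move=> /forall_inP indS.
have far x y : x \in S -> y \in S -> x != y -> x \notin cnbhd e y.
  move=> Sx Sy neq_xy; rewrite inE negb_or neq_xy /=.
  by have /forall_inP := indS y Sy; apply.
apply/forall_inP => _ /imsetP[x Sx ->]; apply/forall_inP => _ /imsetP[y Sy ->].
apply/implyP => neq_xxyy; have neq_xy : x != y by apply: contraNneq neq_xxyy => ->.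
apply/pred0P => -[a b] /=; apply/negbTE/negP; rewrite !cnbhd_cartE.
case/andP => /orP[]/andP[/eqP-> _] /orP[]/andP[/eqP eq_xy N_xy];
  by [rewrite eq_xy eqxx in neq_xy | rewrite (negbTE (far x y Sx Sy neq_xy)) in N_xy].
Qed.

(* The star K_{1,n}: centre None joined to the n leaves Some i. *)
Definition star_graph (n : nat) : rel (option 'I_n) :=
  fun x y => (x == None) != (y == None).
Arguments star_graph : clear implicits.

Section Star.
Variable n : nat.
Local Notation S := (star_graph n).

Lemma star_simple : simple_graph S.
Proof. by split=> [x y|x]; rewrite /star_graph ?eqxx // eq_sym. Qed.

Lemma star_universal : universal S None.
Proof. by move=> v; rewrite inE /star_graph eqxx; case: v. Qed.

Lemma star_leaves_independent : independent S [set~ None].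
Proof.
by apply/forall_inP => x; rewrite !inE => /negbTE x_leaf;
  apply/forall_inP => y; rewrite !inE /star_graph x_leaf => /negbTE ->.
Qed.

Lemma packing_number_star : packing_number S = 1.
Proof. exact: universal_packing_number star_universal. Qed.

(* rho(K_{1,n} [] K_{1,n}) = n: the diagonal of the leaves is a packing of
   size n, and the product bound gives at most max(1, n). *)
Lemma packing_number_star_cart : 0 < n -> packing_number (cart_rel S S) = n.
Proof.
move=> n_gt0; have card_leaves : #|[set~ (None : option 'I_n)]| = n.
  by rewrite cardsC1 card_option card_ord.
apply: (packing_numberE _ (packing_diag star_leaves_independent)); last first.
  by rewrite card_imset ?card_leaves // => x y [].
move=> Q packQ; have [sym_S _] := star_simple.
have := cart_packing_small sym_S star_universal star_universal packQ.
by rewrite card_option card_ord => -[Q_le1|//|//]; exact: leq_trans Q_le1 n_gt0.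
Qed.

End Star.

Theorem mainTheorem1 (b : nat) (hb : (2 <= b)%N) :
  exists (T1 T2 : finType) (e1 : rel T1) (e2 : rel T2),
    simple_graph e1 /\ simple_graph e2 /\
    ((Posz (packing_number (cart_rel e1 e2)))
      - (Posz (packing_number e1) * Posz (packing_number e2)) = Posz b)%R.
Proof.
exists (option 'I_b.+1), (option 'I_b.+1), (star_graph b.+1), (star_graph b.+1).
split; first exact: star_simple.
split; first exact: star_simple.
rewrite packing_number_star_cart // packing_number_star GRing.mul1r.
by rewrite -addn1 PoszD GRing.addrK.
Qed.
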